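(* Let $1\le k\le n$ and let $K$ be a $k$-dimensional vector space. Let $X(k,n)=\{(I,J)\in\mathrm{Hom}(\mathbb{C}^n_x,K)\oplus\mathrm{Hom}^{\mathrm{st}}(K,\mathbb{C}^n_y)\}/GL(K)$ and $X^\vee(k,n)=\{(I,J)\in\mathrm{Hom}^{\mathrm{st}}(\mathbb{C}^n_x,K)\oplus\mathrm{Hom}(K,\mathbb{C}^n_y)\}/GL(K)$, where $\mathrm{Hom}^{\mathrm{st}}$ denotes maps of maximal rank. Then the $\mathbb{C}^\times_q\times T_x\times T_y$-equivariant Hirzebruch genera agree: $$\chi\Big(X(k,n),\sum_i(-t)^i\Omega^i\Big)=\chi\Big(X^\vee(k,n),\sum_i(-t)^i\Omega^i\Big),$$ equivalently, as rational functions, $$\sum_{\substack{I\subset\{1,\dots,n\}\\|I|=k}}\prod_{\substack{i\in I\\ j\notin I}}\frac{1-ty_j/y_i}{1-y_j/y_i}\prod_{\substack{i\in I\\ \ell=1,\dots,n}}\frac{1-tq^{-1}y_i/x_\ell}{1-q^{-1}y_i/x_\ell}=\sum_{\substack{I\subset\{1,\dots,n\}\\|I|=k}}\prod_{\substack{i\in I\\ j\notin I}}\frac{1-tx_i/x_j}{1-x_i/x_j}\prod_{\substack{\ell\in I\\ i=1,\dots,n}}\frac{1-tq^{-1}y_i/x_\ell}{1-q^{-1}y_i/x_\ell}.$$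
   Context: $T_x,T_y$ are maximal tori of $GL(\mathbb{C}^n_x)$, $GL(\mathbb{C}^n_y)$ with coordinates $x_\ell$, $y_i$; $\mathbb{C}^\times_q$ scales $\mathrm{Hom}(\mathbb{C}^n_x,K)$ with weight $+1$ and acts trivially on $\mathrm{Hom}(K,\mathbb{C}^n_y)$. With $\mathscr{K}$ the tautological bundle, the $K$-theory class of the tangent bundle on both spaces is $\mathbb{C}^n_y\otimes\mathscr{K}^*+q\mathscr{K}\otimes(\mathbb{C}^n_x)^*-\mathscr{K}\otimes\mathscr{K}^*$. Torus fixed points on both are indexed by $I\subset\{1,\dots,n\}$, $|I|=k$, with $\mathscr{K}|_I=\sum_{i\in I}y_i^{-1}$ on $X$ and $\mathscr{K}|_I=\sum_{\ell\in I}(qx_\ell)^{-1}$ on $X^\vee$. The Hirzebruch genus $\chi(X,\sum_i(-t)^i\Omega^i_X)$ of these nonproper spaces is defined by equivariant localization as a rational function of $(q,x,y,t)$. *)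

From mathcomp Require Import all_boot all_order all_algebra.
Set Implicit Arguments. Unset Strict Implicit. Unset Printing Implicit Defensive.
Import GRing.Theory.
Local Open Scope ring_scope.

(* Fixed-point localization formula for the Hirzebruch chi_{-t} genus of X(k,n):
   sum over k-subsets I of {1..n} (fixed points), with
   tangent weights y_j/y_i (i in I, j notin I) and q^{-1} y_i / x_l. *)
Definition chi_X (F : fieldType) (n k : nat) (q t : F) (x y : 'I_n -> F) : F :=
  \sum_(I : {set 'I_n} | #|I| == k)
    ((\prod_(i in I) \prod_(j in ~: I) ((1 - t * y j / y i) / (1 - y j / y i))) *
     (\prod_(i in I) \prod_(l : 'I_n)
        ((1 - t * q^-1 * y i / x l) / (1 - q^-1 * y i / x l)))).

Definition chi_Xdual (F : fieldType) (n k : nat) (q t : F) (x y : 'I_n -> F) : F :=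
  \sum_(I : {set 'I_n} | #|I| == k)
    ((\prod_(i in I) \prod_(j in ~: I) ((1 - t * x i / x j) / (1 - x i / x j))) *
     (\prod_(l in I) \prod_(i : 'I_n)
        ((1 - t * q^-1 * y i / x l) / (1 - q^-1 * y i / x l)))).

From mathcomp Require Import all_boot all_order all_algebra.
From mathcomp Require Import ring zify.
Set Implicit Arguments. Unset Strict Implicit. Unset Printing Implicit Defensive.
Import GRing.Theory.
Local Open Scope ring_scope.

(* Write u_l = q x_l and f(a, b) = (a - t b)/(a - b).  Both genera are sums over
   k-subsets of products of values of f, and the identity holds more generally
   for the analogous sums over a set S of y-variables and a set T of
   u-variables with |S| = |T|; this is proved by induction on |S|.  Fix s in T
   and replace u_s by a variable w.  The difference of the two sides is then a
   rational function of w with simple poles at the y_r and u_j only.  Its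
   residues at the y_r vanish by induction and those at the u_j cancel, so it
   is constant in w.  Its value at w = 0 is t^(k+1) times its value at
   infinity, hence it vanishes unless t is a root of unity; since everything
   is polynomial in t, it vanishes for all t. *)

Lemma prod_frac_partial (L : fieldType) (X : finType) (c a b : X -> L)
    (Z : {set X}) (w : L) :
  {in Z &, injective b} -> (forall p, p \in Z -> w != b p) ->
  \prod_(p in Z) ((c p * w - a p) / (w - b p)) =
  \prod_(p in Z) c p + \sum_(r in Z) ((c r * b r - a r) / (w - b r) *
      \prod_(p in Z :\ r) ((c p * b r - a p) / (b r - b p))).
Proof.
move cardZ : #|Z| => n; elim: n Z w cardZ => [|n IH] Z w cardZ b_inj w_pole.
  by move/eqP: cardZ; rewrite cards_eq0 => /eqP ->; rewrite !big_set0 addr0.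
have [z Zz] : exists z, z \in Z by apply/card_gt0P; rewrite cardZ.
have Z'n : #|Z :\ z| = n by move: cardZ; rewrite (cardsD1 z) Zz => -[].
have b_inj' : {in Z :\ z &, injective b} by apply: sub_in2 b_inj => p /setD1P[].
have w_pole' p : p \in Z :\ z -> w != b p by move=> /setD1P[_ /w_pole].
have z_pole p : p \in Z :\ z -> b z != b p.
  by move=> /setD1P[pz Zp]; apply: contra pz => /eqP/(b_inj _ _ Zz Zp)->.
rewrite (big_setD1 z Zz) /= (IH _ w Z'n b_inj' w_pole').
rewrite (big_setD1 z Zz) /= (big_setD1 z Zz) /= (IH _ (b z) Z'n b_inj' z_pole).
have split_z r : r \in Z :\ z ->
    \prod_(p in Z :\ r) ((c p * b r - a p) / (b r - b p)) =
    (c z * b r - a z) / (b r - b z) *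
    \prod_(p in Z :\ z :\ r) ((c p * b r - a p) / (b r - b p)).
  move=> /setD1P[rz _]; rewrite (big_setD1 z) ?inE ?Zz 1?eq_sym ?rz //=.
  by rewrite setDDl setUC -setDDl.
under [X in _ = _ + (_ + X)]eq_bigr => r Zr do rewrite split_z //.
have wz : w - b z != 0 by rewrite subr_eq0 w_pole.
rewrite !mulrDr !mulr_sumr -!addrA -big_split /= addrA.
congr (_ + _); first by field; rewrite wz.
apply: eq_bigr => r Zr.
have wr : w - b r != 0 by rewrite subr_eq0 w_pole'.
have zr : b z - b r != 0 by rewrite subr_eq0 z_pole.
have rz : b r - b z != 0 by rewrite subr_eq0 eq_sym z_pole.
by field; rewrite wz wr zr rz.
Qed.

(* [hfactor t a b] is the factor (1 - t b/a)/(1 - b/a) contributed by a tangent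
   weight b/a, with the denominators cleared (see [hfactor_ratio]). *)
Definition hfactor (L : fieldType) (t a b : L) := (a - t * b) / (a - b).

(* [locsum g y u k S T] is the fixed-point sum of [chi_X] restricted to the
   variables [y i] (i in S) and [u l] (l in T), where [u l] plays the role of
   [q * x l] and [g a b] the contribution of the weight b/a; [locsum_dual] is
   the same for [chi_Xdual]. *)
Section LocalizationSums.
Context {R : comNzRingType} {V : Type} {I : finType}.
Variables (g : V -> V -> R) (y u : I -> V).

Definition locterm (S T J : {set I}) : R :=
  (\prod_(i in J) \prod_(j in S :\: J) g (y i) (y j)) *
  (\prod_(i in J) \prod_(l in T) g (u l) (y i)).

Definition locsum (k : nat) (S T : {set I}) : R :=
  \sum_(J : {set I} | (J \subset S) && (#|J| == k)) locterm S T J.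

Definition locterm_dual (S T M : {set I}) : R :=
  (\prod_(l in M) \prod_(j in T :\: M) g (u j) (u l)) *
  (\prod_(l in M) \prod_(i in S) g (u l) (y i)).

Definition locsum_dual (k : nat) (S T : {set I}) : R :=
  \sum_(M : {set I} | (M \subset T) && (#|M| == k)) locterm_dual S T M.

Lemma locsum0 S T : locsum 0 S T = 1.
Proof.
rewrite /locsum (big_pred1 set0) => [|J].
  by rewrite /locterm !big_set0 mulr1.
by rewrite /= cards_eq0 andbC; case: eqP => [->|]; rewrite ?sub0set.
Qed.

Lemma locsum_dual0 S T : locsum_dual 0 S T = 1.
Proof.
rewrite /locsum_dual (big_pred1 set0) => [|M].
  by rewrite /locterm_dual !big_set0 mulr1.
by rewrite /= cards_eq0 andbC; case: eqP => [->|]; rewrite ?sub0set.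
Qed.

Lemma locsum_eq0 k (S T : {set I}) : (#|S| < k)%N -> locsum k S T = 0.
Proof.
move=> ltSk; rewrite /locsum big_pred0 // => J.
apply/negbTE/andP => -[/subset_leq_card leJS /eqP cardJ].
by move: (leq_ltn_trans leJS ltSk); rewrite cardJ ltnn.
Qed.

Lemma locsum_dual_eq0 k (S T : {set I}) : (#|T| < k)%N -> locsum_dual k S T = 0.
Proof.
move=> ltTk; rewrite /locsum_dual big_pred0 // => M.
apply/negbTE/andP => -[/subset_leq_card leMT /eqP cardM].
by move: (leq_ltn_trans leMT ltTk); rewrite cardM ltnn.
Qed.

End LocalizationSums.

Lemma sum_subsets_containing (R : nmodType) (I : finType) (A : {set I}) r k
    (F : {set I} -> R) :
  r \in A ->
  \sum_(J : {set I} | (J \subset A) && (#|J| == k.+1) && (r \in J)) F J =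
  \sum_(J : {set I} | (J \subset A :\ r) && (#|J| == k)) F (r |: J).
Proof.
move=> Ar.
rewrite (reindex_onto (fun J => r |: J) (fun J => J :\ r)); last first.
  by move=> J /andP[_ Jr]; rewrite setD1K.
apply: eq_bigl => J /=.
rewrite subsetD1 setU11 andbT.
case Jr: (r \in J) => /=.
  rewrite andbF; apply/negbTE/negP => /andP[_ /eqP E].
  by move: Jr; rewrite -E setD11.
rewrite setU1K ?Jr // eqxx andbT cardsU1 Jr add1n eqSS.
by rewrite subUset sub1set Ar andbT.
Qed.

Section HFactor.
Variables (L : fieldType) (t : L).
Local Notation f := (hfactor t).

Lemma hfactor0l b : b != 0 -> f 0 b = t.
Proof. by move=> b0; rewrite /hfactor !sub0r invrN mulrNN mulfK. Qed.

Lemma hfactor0r a : a != 0 -> f a 0 = 1.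
Proof. by move=> a0; rewrite /hfactor mulr0 !subr0 divff. Qed.

Lemma hfactorNN a b : (t * b - a) / (b - a) = f a b.
Proof. by rewrite /hfactor -opprB -[b - a]opprB invrN mulrNN. Qed.

Lemma prod_hfactor_partial (I : finType) (v : I -> L) (J : {set I}) w :
  {in J &, injective v} -> (forall i, i \in J -> w != v i) ->
  \prod_(i in J) f w (v i) =
  1 + \sum_(r in J) ((v r - t * v r) / (w - v r) * \prod_(i in J :\ r) f (v r) (v i)).
Proof.
move=> v_inj w_pole.
have := prod_frac_partial (fun _ => 1) (fun i => t * v i) v_inj w_pole.
rewrite prodr_const expr1n.
under eq_bigr do rewrite mul1r.
move=> ->; congr (_ + _).
by apply: eq_bigr => r _; rewrite mul1r.
Qed.

Lemma hfactor_ratio (a b : L) :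
  a != 0 -> (1 - t * b / a) / (1 - b / a) = f a b.
Proof.
move=> a0; have sub_div c : 1 - c / a = (a - c) / a by rewrite mulrBl divff.
by rewrite !sub_div invfM invrK /hfactor mulrACA mulVf ?mulr1.
Qed.

End HFactor.

Section Duality.
Variables (L : fieldType) (I : finType) (t : L) (y u : I -> L).
Hypotheses (y_inj : injective y) (u_inj : injective u).
Hypotheses (u_neq_y : forall i l, u l != y i) (y_neq0 : forall i, y i != 0).
Hypothesis u_neq0 : forall l, u l != 0.
Hypothesis t_not_root1 : forall m, (0 < m)%N -> t ^+ m != 1.
Local Notation f := (hfactor t).

Lemma prod_hfactor_mixed_partial (P S : {set I}) w :
  (forall j, j \in P -> w != u j) -> (forall i, i \in S -> w != y i) ->
  \prod_(j in P) f (u j) w * \prod_(i in S) f w (y i) =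
  t ^+ #|P| + \sum_(j in P) ((t * u j - u j) / (w - u j) *
     (\prod_(j' in P :\ j) f (u j') (u j) * \prod_(i in S) f (u j) (y i)))
  + \sum_(r in S) ((y r - t * y r) / (w - y r) *
     (\prod_(j' in P) f (u j') (y r) * \prod_(i in S :\ r) f (y r) (y i))).
Proof.
move=> P_pole S_pole.
pose c (p : I + I) := if p is inl _ then t else 1.
pose a (p : I + I) := match p with inl j => u j | inr i => t * y i end.
pose b (p : I + I) := match p with inl j => u j | inr i => y i end.
pose Z := [set p | match p with inl j => j \in P | inr i => i \in S end].
have b_inj : {in Z &, injective b}.
  move=> [j|i] [j'|i'] _ _ /= E.
  - by rewrite (u_inj E).
  - by move: (u_neq_y i' j); rewrite E eqxx.
  - by move: (u_neq_y i j'); rewrite E eqxx.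
  - by rewrite (y_inj E).
have w_pole p : p \in Z -> w != b p.
  by case: p => [j|i]; rewrite inE /=; [apply: P_pole | apply: S_pole].
have ZP j : (inl j \in Z) = (j \in P) by rewrite inE.
have ZS i : (inr i \in Z) = (i \in S) by rewrite inE.
have lhsE : \prod_(p in Z) ((c p * w - a p) / (w - b p)) =
    \prod_(j in P) f (u j) w * \prod_(i in S) f w (y i).
  rewrite big_sumType; congr (_ * _); apply: eq_big => // i _.
    by rewrite hfactorNN.
  by rewrite mul1r.
have constE : \prod_(p in Z) c p = t ^+ #|P|.
  by rewrite big_sumType /= (eq_bigl _ _ ZP) prodr_const big1 ?mulr1.
rewrite -lhsE prod_frac_partial // constE big_sumType -addrA; congr (_ + (_ + _)).
  apply: eq_big => // j _; rewrite big_sumType /=; congr (_ * (_ * _)).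
    apply: eq_big => [j'|j' _]; first by rewrite !inE.
    by rewrite hfactorNN.
  by apply: eq_big => [i|i _]; rewrite ?inE // mul1r.
apply: eq_big => // r _; rewrite /= mul1r big_sumType /=; congr (_ * (_ * _)).
  by apply: eq_big => [j'|j' _]; rewrite ?inE // hfactorNN.
by apply: eq_big => [i|i _]; rewrite ?inE // mul1r.
Qed.

Section InductionStep.
Variables (S T : {set I}) (s : I) (k : nat).
Hypotheses (Ts : s \in T) (cardST : #|S| = #|T|).
Local Notation T' := (T :\ s).
Hypothesis IH : forall r, r \in S ->
  locsum f y u k (S :\ r) T' = locsum_dual f y u k (S :\ r) T'.

Local Notation At := (locterm f y u S T').
Local Notation Bt := (locterm_dual f y u S T').

(* The variable [w] stands for [u s]; [rhs_out_at] and [rhs_in_at] collect the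
   terms of [locsum_dual] with s outside and inside M.  These sums are rational
   in [w], with simple poles at the [y r] and [u j] and limits [*_oo] at
   infinity. *)
Definition lhs_at w := \sum_(J : {set I} | (J \subset S) && (#|J| == k.+1))
  At J * \prod_(i in J) f w (y i).
Definition rhs_out_at w := \sum_(M : {set I} | (M \subset T') && (#|M| == k.+1))
  Bt M * \prod_(l in M) f w (u l).
Definition rhs_in_at w := \sum_(M : {set I} | (M \subset T') && (#|M| == k))
  Bt M * (\prod_(j in T' :\: M) f (u j) w * \prod_(i in S) f w (y i)).

Definition lhs_oo := \sum_(J : {set I} | (J \subset S) && (#|J| == k.+1)) At J.
Definition rhs_out_oo := \sum_(M : {set I} | (M \subset T') && (#|M| == k.+1)) Bt M.
Definition rhs_in_oo := \sum_(M : {set I} | (M \subset T') && (#|M| == k))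
  Bt M * t ^+ #|T' :\: M|.

Definition res_lhs r :=
  \sum_(J : {set I} | (J \subset S) && (#|J| == k.+1) && (r \in J))
    At J * \prod_(i in J :\ r) f (y r) (y i).
Definition res_rhs_in r := \sum_(M : {set I} | (M \subset T') && (#|M| == k))
  Bt M * (\prod_(j in T' :\: M) f (u j) (y r) * \prod_(i in S :\ r) f (y r) (y i)).
Definition res_out j :=
  \sum_(M : {set I} | (M \subset T') && (#|M| == k.+1) && (j \in M))
    Bt M * \prod_(l in M :\ j) f (u j) (u l).
Definition res_in j :=
  \sum_(M : {set I} | (M \subset T') && (#|M| == k) && (j \in T' :\: M))
    Bt M * (\prod_(j' in (T' :\: M) :\ j) f (u j') (u j) * \prod_(i in S) f (u j) (y i)).

Lemma locsum_lhs_at : locsum f y u k.+1 S T = lhs_at (u s).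
Proof.
apply: eq_bigr => J _; rewrite /locterm -mulrA; congr (_ * _).
by rewrite -big_split; apply: eq_bigr => i _ /=; rewrite (big_setD1 s Ts) mulrC.
Qed.

Lemma locsum_dual_rhs_at :
  locsum_dual f y u k.+1 S T = rhs_out_at (u s) + rhs_in_at (u s).
Proof.
rewrite /locsum_dual (bigID (fun M : {set I} => s \in M)) /= addrC; congr (_ + _).
  apply: eq_big => [M | M /andP[/andP[_ _] sM]].
    by rewrite subsetD1; case: (M \subset T); case: (s \in M); case: (#|M| == k.+1).
  rewrite /locterm_dual mulrAC; congr (_ * _); rewrite -big_split.
  apply: eq_bigr => l _ /=.
  have TMs : s \in T :\: M by rewrite in_setD sM Ts.
  rewrite (big_setD1 s TMs) /= mulrC; congr (_ * _).
  by apply: eq_bigl => j; rewrite !inE; case: (j == s); case: (j \in M).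
rewrite (sum_subsets_containing _ _ Ts); apply: eq_bigr => M /andP[MT' _].
have sM : s \notin M by move: MT'; rewrite subsetD1 => /andP[].
by rewrite /locterm_dual !big_setU1 //= -setDDl; ring.
Qed.

Lemma lhs_at_partial w : (forall i, i \in S -> w != y i) ->
  lhs_at w = lhs_oo + \sum_(r in S) ((y r - t * y r) / (w - y r) * res_lhs r).
Proof.
move=> S_pole.
transitivity (\sum_(J : {set I} | (J \subset S) && (#|J| == k.+1))
  (At J + \sum_(r in J) At J * ((y r - t * y r) / (w - y r) *
       \prod_(i in J :\ r) f (y r) (y i)))).
  apply: eq_bigr => J /andP[/subsetP JS _].
  rewrite prod_hfactor_partial ?mulrDr ?mulr1 ?mulr_sumr //.
    exact: in2W.
  by move=> i /JS; apply: S_pole.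
rewrite big_split /=; congr (_ + _).
rewrite (exchange_big_dep (mem S)) /=; last by move=> J r /andP[/subsetP JS _] /JS.
by apply: eq_bigr => r _; rewrite mulr_sumr; apply: eq_bigr => J _; rewrite mulrCA.
Qed.

Lemma rhs_out_at_partial w : (forall l, l \in T' -> w != u l) ->
  rhs_out_at w = rhs_out_oo + \sum_(j in T') ((u j - t * u j) / (w - u j) * res_out j).
Proof.
move=> T'_pole.
transitivity (\sum_(M : {set I} | (M \subset T') && (#|M| == k.+1))
  (Bt M + \sum_(j in M) Bt M * ((u j - t * u j) / (w - u j) *
       \prod_(l in M :\ j) f (u j) (u l)))).
  apply: eq_bigr => M /andP[/subsetP MT' _].
  rewrite prod_hfactor_partial ?mulrDr ?mulr1 ?mulr_sumr //.
    exact: in2W.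
  by move=> l /MT'; apply: T'_pole.
rewrite big_split /=; congr (_ + _).
rewrite (exchange_big_dep (mem T')) /=; last by move=> M j /andP[/subsetP MT' _] /MT'.
by apply: eq_bigr => j _; rewrite mulr_sumr; apply: eq_bigr => M _; rewrite mulrCA.
Qed.

Lemma rhs_in_at_partial w :
  (forall l, l \in T' -> w != u l) -> (forall i, i \in S -> w != y i) ->
  rhs_in_at w = rhs_in_oo + \sum_(j in T') ((t * u j - u j) / (w - u j) * res_in j)
                + \sum_(r in S) ((y r - t * y r) / (w - y r) * res_rhs_in r).
Proof.
move=> T'_pole S_pole.
transitivity (\sum_(M : {set I} | (M \subset T') && (#|M| == k))
  (Bt M * t ^+ #|T' :\: M|
   + \sum_(j in T' :\: M) Bt M * ((t * u j - u j) / (w - u j) *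
     (\prod_(j' in (T' :\: M) :\ j) f (u j') (u j) * \prod_(i in S) f (u j) (y i)))
   + \sum_(r in S) Bt M * ((y r - t * y r) / (w - y r) *
     (\prod_(j in T' :\: M) f (u j) (y r) * \prod_(i in S :\ r) f (y r) (y i))))).
  apply: eq_bigr => M _; rewrite prod_hfactor_mixed_partial //.
    by rewrite !mulrDr !mulr_sumr.
  by move=> j /setDP[/T'_pole].
rewrite !big_split /=; congr (_ + _ + _).
  rewrite (exchange_big_dep (mem T')) /=; last by move=> M j _ /setDP[].
  by apply: eq_bigr => j _; rewrite mulr_sumr; apply: eq_bigr => M _; rewrite mulrCA.
rewrite exchange_big /=.
by apply: eq_bigr => r _; rewrite mulr_sumr; apply: eq_bigr => M _; rewrite mulrCA.
Qed.

Definition res_factor r :=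
  \prod_(j in S :\ r) f (y r) (y j) * \prod_(l in T') f (u l) (y r).

Lemma res_lhsE r : r \in S -> res_lhs r = res_factor r * locsum f y u k (S :\ r) T'.
Proof.
move=> Sr; rewrite /res_lhs (sum_subsets_containing _ _ Sr) /locsum mulr_sumr.
apply: eq_bigr => J /andP[JS _].
have rJ : r \notin J by move: JS; rewrite subsetD1 => /andP[].
rewrite setU1K // /locterm !big_setU1 //= -setDDl.
by rewrite /res_factor (big_setID (A := S :\ r) J) /= (setIidPr JS); ring.
Qed.

Lemma res_rhs_inE r :
  r \in S -> res_rhs_in r = res_factor r * locsum_dual f y u k (S :\ r) T'.
Proof.
move=> Sr; rewrite /res_rhs_in /locsum_dual mulr_sumr.
apply: eq_bigr => M /andP[MT' _]; rewrite /locterm_dual.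
have -> : \prod_(l in M) \prod_(i in S) f (u l) (y i) =
    \prod_(l in M) f (u l) (y r) * \prod_(l in M) \prod_(i in S :\ r) f (u l) (y i).
  by rewrite -big_split; apply: eq_bigr => l _; rewrite (big_setD1 r Sr).
by rewrite /res_factor (big_setID (A := T') M) /= (setIidPr MT'); ring.
Qed.

Lemma res_out_in j : j \in T' -> res_out j = res_in j.
Proof.
move=> T'j; rewrite /res_out /res_in (sum_subsets_containing _ _ T'j).
apply: eq_big => [M | M /andP[MT' _]].
  rewrite subsetD1 in_setD T'j andbT.
  by case: (M \subset T'); case: (j \in M); case: (#|M| == k).
have jM : j \notin M by move: MT'; rewrite subsetD1 => /andP[].
have T'Mj : j \in T' :\: M by rewrite in_setD jM T'j.
rewrite setU1K // /locterm_dual !big_setU1 //=.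
have -> : T' :\: (j |: M) = (T' :\: M) :\ j by rewrite [RHS]setDDl setUC.
have -> : \prod_(l in M) \prod_(j0 in T' :\: M) f (u j0) (u l) =
    \prod_(l in M) f (u j) (u l) *
    \prod_(l in M) \prod_(j0 in (T' :\: M) :\ j) f (u j0) (u l).
  by rewrite -big_split; apply: eq_bigr => l _; rewrite (big_setD1 j T'Mj).
ring.
Qed.

(* The residues at the [y r] agree by induction, those at the [u j] cancel. *)
Lemma lhs_rhs_at_const w :
  (forall i, i \in S -> w != y i) -> (forall l, l \in T' -> w != u l) ->
  lhs_at w - (rhs_out_at w + rhs_in_at w) = lhs_oo - (rhs_out_oo + rhs_in_oo).
Proof.
move=> S_pole T'_pole.
rewrite lhs_at_partial // rhs_out_at_partial // rhs_in_at_partial //.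
have -> : \sum_(r in S) ((y r - t * y r) / (w - y r) * res_lhs r) =
          \sum_(r in S) ((y r - t * y r) / (w - y r) * res_rhs_in r).
  by apply: eq_bigr => r Sr; rewrite res_lhsE // res_rhs_inE // IH.
have -> : \sum_(j in T') ((t * u j - u j) / (w - u j) * res_in j) =
         - \sum_(j in T') ((u j - t * u j) / (w - u j) * res_out j).
  rewrite -sumrN; apply: eq_bigr => j T'j.
  by rewrite res_out_in // -opprB !mulNr.
ring.
Qed.

Lemma lhs_at0 : lhs_at 0 = t ^+ k.+1 * lhs_oo.
Proof.
rewrite mulr_sumr; apply: eq_bigr => J /andP[_ /eqP cardJ].
by rewrite (eq_bigr _ (fun i _ => hfactor0l t (y_neq0 i))) prodr_const cardJ mulrC.
Qed.

Lemma rhs_out_at0 : rhs_out_at 0 = t ^+ k.+1 * rhs_out_oo.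
Proof.
rewrite mulr_sumr; apply: eq_bigr => M /andP[_ /eqP cardM].
by rewrite (eq_bigr _ (fun l _ => hfactor0l t (u_neq0 l))) prodr_const cardM mulrC.
Qed.

Lemma rhs_in_at0 : rhs_in_at 0 = t ^+ k.+1 * rhs_in_oo.
Proof.
rewrite mulr_sumr; apply: eq_bigr => M /andP[MT' /eqP cardM].
rewrite (eq_bigr _ (fun j _ => hfactor0r t (u_neq0 j))) prodr_const expr1n mul1r.
rewrite (eq_bigr _ (fun i _ => hfactor0l t (y_neq0 i))) prodr_const mulrCA -exprD.
have cardTM : #|T' :\: M| = (#|T'| - #|M|)%N by rewrite cardsD (setIidPr MT').
have cardT : #|T| = #|T'|.+1 by rewrite (cardsD1 s T) Ts.
have := subset_leq_card MT'.
by rewrite cardTM cardST cardT cardM => leMT'; congr (_ * t ^+ _); lia.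
Qed.

Lemma locsum_duality_step : locsum f y u k.+1 S T = locsum_dual f y u k.+1 S T.
Proof.
set D := lhs_oo - (rhs_out_oo + rhs_in_oo).
have D0 : D = 0.
  have at0 : t ^+ k.+1 * D = D.
    rewrite /D -{2}(lhs_rhs_at_const (w := 0)) ?lhs_at0 ?rhs_out_at0 ?rhs_in_at0.
    - by ring.
    - by move=> i _; rewrite eq_sym.
    - by move=> l _; rewrite eq_sym.
  move/eqP: at0; rewrite -subr_eq0 -[X in _ - X]mul1r -mulrBl mulf_eq0 subr_eq0.
  by rewrite (negbTE (t_not_root1 _)) // => /eqP.
have S_pole i : i \in S -> u s != y i by move=> _; apply: u_neq_y.
have T'_pole l : l \in T' -> u s != u l.
  by move=> /setD1P[ls _]; rewrite (inj_eq u_inj) eq_sym.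
apply/eqP; rewrite -subr_eq0 locsum_lhs_at locsum_dual_rhs_at.
by rewrite (lhs_rhs_at_const S_pole T'_pole) -/D D0.
Qed.

End InductionStep.

Lemma locsum_duality k (S T : {set I}) :
  #|S| = #|T| -> locsum f y u k S T = locsum_dual f y u k S T.
Proof.
move=> cardST; have [m cardS] : exists m, #|S| = m by exists #|S|.
elim: m k S T cardS cardST => [|m IH] [|k] S T cardS cardST.
- by rewrite locsum0 locsum_dual0.
- by rewrite !locsum_eq0 ?locsum_dual_eq0 -?cardST ?cardS.
- by rewrite locsum0 locsum_dual0.
have /card_gt0P[s Ts] : (0 < #|T|)%N by rewrite -cardST cardS.
have cardT' : #|T :\ s| = m by move: cardST; rewrite cardS (cardsD1 s) Ts => -[].
apply: (locsum_duality_step Ts cardST) => r Sr.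
have cardSr : #|S :\ r| = m by move: cardS; rewrite (cardsD1 r) Sr => -[].
by apply: IH; rewrite ?cardSr ?cardT'.
Qed.

End Duality.

Section MorphLocsum.
Variables (R R' : comNzRingType) (V : Type) (I : finType) (phi : {rmorphism R -> R'}).
Variables (g : V -> V -> R) (g' : V -> V -> R').

Lemma rmorph_locsum : (forall a b, g' a b = phi (g a b)) ->
  forall (y u : I -> V) k S T, phi (locsum g y u k S T) = locsum g' y u k S T.
Proof.
move=> g'E y u k S T; rewrite rmorph_sum; apply: eq_bigr => J _.
rewrite rmorphM !rmorph_prod; congr (_ * _); apply: eq_bigr => i _.
  by rewrite rmorph_prod; apply: eq_bigr => j _.
by rewrite rmorph_prod; apply: eq_bigr => l _.
Qed.

Lemma rmorph_locsum_dual : (forall a b, g' a b = phi (g a b)) ->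
  forall (y u : I -> V) k S T, phi (locsum_dual g y u k S T) = locsum_dual g' y u k S T.
Proof.
move=> g'E y u k S T; rewrite rmorph_sum; apply: eq_bigr => M _.
rewrite rmorphM !rmorph_prod; congr (_ * _); apply: eq_bigr => l _.
  by rewrite rmorph_prod; apply: eq_bigr => j _.
by rewrite rmorph_prod; apply: eq_bigr => i _.
Qed.

End MorphLocsum.

Section GenericT.
Variable F : fieldType.

Definition hfactor_poly (a b : F) : {poly F} := (a%:P - 'X * b%:P) * ((a - b)^-1)%:P.

Lemma horner_hfactor_poly t a b : (hfactor_poly a b).[t] = hfactor t a b.
Proof. by rewrite /hfactor_poly /hfactor !hornerE. Qed.

Local Notation tofracC a := (tofrac a%:P).

Lemma tofrac_hfactor_poly a b :
  tofrac (hfactor_poly a b) = hfactor (tofrac 'X) (tofracC a) (tofracC b).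
Proof.
rewrite /hfactor_poly /hfactor rmorphM rmorphB rmorphM; congr (_ * _).
have [->|ab] := eqVneq a b; first by rewrite !subrr invr0 rmorph0 invr0.
have ab0 : tofracC a - tofracC b != 0.
  by rewrite -tofracB -polyCB tofrac_eq0 polyC_eq0 subr_eq0.
apply: (mulIf ab0); rewrite mulVf // -tofracB -polyCB -tofracM -polyCM.
by rewrite mulVf ?subr_eq0 // rmorph1.
Qed.

Lemma locsum_duality_all_t (I : finType) (t : F) (y u : I -> F) k :
  injective y -> injective u -> (forall i l, u l != y i) ->
  (forall i, y i != 0) -> (forall l, u l != 0) ->
  locsum (hfactor t) y u k setT setT = locsum_dual (hfactor t) y u k setT setT.
Proof.
move=> y_inj u_inj u_neq_y y_neq0 u_neq0.
(* Both sides are polynomial in t, and over F(X) the indeterminate X is not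
   a root of unity. *)
have evalE a b := esym (horner_hfactor_poly t a b).
rewrite -(rmorph_locsum (phi := horner_eval t) evalE).
rewrite -(rmorph_locsum_dual (phi := horner_eval t) evalE).
congr (horner_eval t _); apply/eqP; rewrite -tofrac_eq; apply/eqP.
have fracE a b := esym (tofrac_hfactor_poly a b).
rewrite (rmorph_locsum (phi := @tofrac _) fracE).
rewrite (rmorph_locsum_dual (phi := @tofrac _) fracE).
have tofracC_inj : injective (fun a : F => tofracC a).
  by move=> a b /eqP; rewrite tofrac_eq (inj_eq polyC_inj) => /eqP.
apply: (locsum_duality (y := fun i => tofracC (y i)) (u := fun l => tofracC (u l))).
- by move=> i j /tofracC_inj /y_inj.
- by move=> i j /tofracC_inj /u_inj.
- by move=> i l; rewrite tofrac_eq (inj_eq polyC_inj).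
- by move=> i; rewrite tofrac_eq0 polyC_eq0.
- by move=> l; rewrite tofrac_eq0 polyC_eq0.
- move=> m m0; rewrite -tofracXn -tofrac1 tofrac_eq.
  by apply: contraTneq m0 => Xm1; have := size_polyXn F m; rewrite Xm1 size_poly1 => -[<-].
- by rewrite !cardsT.
Qed.

End GenericT.

Section ChiLocsum.
Variables (F : fieldType) (n k : nat) (q t : F) (x y : 'I_n -> F).
Hypotheses (q0 : q != 0) (x0 : forall l, x l != 0) (y0 : forall i, y i != 0).
Local Notation u := (fun l => q * x l).

Lemma chi_X_locsum : @chi_X F n k q t x y = locsum (hfactor t) y u k setT setT.
Proof.
apply: eq_big => [J|J _]; first by rewrite subsetT.
rewrite /locterm setTD; congr (_ * _); apply: eq_bigr => i _.
  by apply: eq_bigr => j _; rewrite hfactor_ratio.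
apply: eq_big => [l|l _]; first by rewrite in_setT.
rewrite -hfactor_ratio ?mulf_neq0 //.
by congr ((1 - _) / (1 - _)); field; rewrite q0 x0.
Qed.

Lemma chi_Xdual_locsum_dual :
  @chi_Xdual F n k q t x y = locsum_dual (hfactor t) y u k setT setT.
Proof.
apply: eq_big => [M|M _]; first by rewrite subsetT.
rewrite /locterm_dual setTD; congr (_ * _); apply: eq_bigr => l _.
  apply: eq_bigr => j _; rewrite -hfactor_ratio ?mulf_neq0 //.
  by congr ((1 - _) / (1 - _)); field; rewrite q0 x0.
apply: eq_big => [i|i _]; first by rewrite in_setT.
rewrite -hfactor_ratio ?mulf_neq0 //.
by congr ((1 - _) / (1 - _)); field; rewrite q0 x0.
Qed.

End ChiLocsum.

Theorem theorem2p2 (F : fieldType) (n k : nat) (q t : F) (x y : 'I_n -> F) :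
  (1 <= k <= n)%N ->
  q != 0 ->
  (forall l, x l != 0) ->
  (forall i, y i != 0) ->
  (forall i j, i != j -> x i != x j) ->
  (forall i j, i != j -> y i != y j) ->
  (forall i l, y i != q * x l) ->
  @chi_X F n k q t x y = @chi_Xdual F n k q t x y.
Proof.
move=> _ q0 x0 y0 x_inj y_inj y_neq_qx.
rewrite chi_X_locsum // chi_Xdual_locsum_dual //.
apply: locsum_duality_all_t => //.
- by move=> i j yij; apply: contraTeq (y_inj i j) _; rewrite yij.
- by move=> i j /(mulfI q0) xij; apply: contraTeq (x_inj i j) _; rewrite xij.
- by move=> i l; rewrite eq_sym.
- by move=> l; rewrite mulf_neq0.
Qed.
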